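(* Let $A$ be a unital power-associative algebra over a field of characteristic zero, let $R$ be a Rota–Baxter operator of weight zero on $A$, and suppose $(R(1))^m=0$ for some $m\in\mathbb N$. Then (a) $R^{2m}=0$ if $A$ is associative or alternative; (b) $R^{3m-1}=0$ if $A$ is a Jordan algebra.
   Context: A linear operator $R$ on $A$ is a Rota–Baxter operator of weight $0$ if $R(x)R(y)=R(R(x)y+xR(y))$ for all $x,y\in A$. Power-associative: every element generates an associative subalgebra. *)

(* A (possibly non-associative) unital algebra over a field F
   is represented by an F-vector space V (lmodType F) with a bilinear
   multiplication [mul] and a two-sided unit [one]. *)
From HB Require Import structures.
From mathcomp Require Import all_boot all_order all_algebra.
Set Implicit Arguments. Unset Strict Implicit. Unset Printing Implicit Defensive.
Import GRing.Theory.
Local Open Scope ring_scope.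

Section Alg.
Variables (F : fieldType) (V : lmodType F) (mul : V -> V -> V) (one : V).

Definition bilinear_mul : Prop :=
  (forall (a : F) (x y z : V), mul (a *: x + y) z = a *: mul x z + mul y z) /\
  (forall (a : F) (x y z : V), mul z (a *: x + y) = a *: mul z x + mul z y).

Definition unital : Prop := forall x : V, mul one x = x /\ mul x one = x.

Inductive gen (x : V) : V -> Prop :=
  | gen_base : gen x x
  | gen_zero : gen x 0
  | gen_lin : forall (a : F) (u v : V), gen x u -> gen x v -> gen x (a *: u + v)
  | gen_mul : forall u v : V, gen x u -> gen x v -> gen x (mul u v).

Definition power_associative : Prop :=
  forall x a b c : V, gen x a -> gen x b -> gen x c ->
    mul (mul a b) c = mul a (mul b c).

Definition associative_alg : Prop :=
  forall x y z : V, mul (mul x y) z = mul x (mul y z).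

Definition alternative_alg : Prop :=
  (forall x y : V, mul (mul x x) y = mul x (mul x y)) /\
  (forall x y : V, mul (mul y x) x = mul y (mul x x)).

Definition jordan_alg : Prop :=
  (forall x y : V, mul x y = mul y x) /\
  (forall x y : V, mul (mul (mul x x) y) x = mul (mul x x) (mul y x)).

Definition rota_baxter0 (R : V -> V) : Prop :=
  (forall (a : F) (x y : V), R (a *: x + y) = a *: R x + R y) /\
  (forall x y : V, mul (R x) (R y) = R (mul (R x) y + mul x (R y))).

(* Powers: x^0 = 1, x^(n+1) = x * x^n (well defined under power-associativity). *)
Fixpoint npow (x : V) (n : nat) : V :=
  match n with 0 => one | n'.+1 => mul x (npow x n') end.

End Alg.

(* Expanding [R(1)^n] with the Rota-Baxter identity gives [R(1)^n = n! R^n(1)],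
   so [R^m(1) = 0] in characteristic zero.  Rewriting the identity as
   [R(x R(y)) = R(x) R(y) - R(R(x) y)] one shows by induction on [i] that
   [R^i(R^k(1) R^i(y)) = 0] whenever [R^(k+i)(1) = 0]; for [k = 0], [i = m]
   this is [R^(2m) = 0].  No associativity-type identity is needed, so the
   bound [2m] holds in every unital algebra, and [3m - 1 >= 2m] covers the
   Jordan case. *)
From HB Require Import structures.
From mathcomp Require Import all_boot all_order all_algebra zify.
Set Implicit Arguments.
Unset Strict Implicit.
Unset Printing Implicit Defensive.
Import GRing.Theory.
Local Open Scope ring_scope.

Section LinearFunctions.
Variables (F : fieldType) (U W : lmodType F).

Lemma linear_fun0 (f : U -> W) : linear f -> f 0 = 0.
Proof. by move=> fL; rewrite -(subrr 0) (zmod_morphism_linear fL) subrr. Qed.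

Lemma linear_funZ (f : U -> W) a x : linear f -> f (a *: x) = a *: f x.
Proof. by move=> fL; rewrite -[a *: x]addr0 fL linear_fun0 ?addr0. Qed.

Lemma iter_linear (f : U -> U) n : linear f -> linear (iter n f).
Proof. by move=> fL; elim: n => // n IH a x y /=; rewrite IH fL. Qed.

End LinearFunctions.

Section RotaBaxter.
Variables (F : fieldType) (V : lmodType F) (mul : V -> V -> V) (one : V).
Variable R : V -> V.
Hypothesis mul_linl : forall y, linear (mul^~ y).
Hypothesis mul_linr : forall x, linear (mul x).
Hypothesis mul1x : forall x, mul one x = x.
Hypothesis mulx1 : forall x, mul x one = x.
Hypothesis R_linear : linear R.
Hypothesis R_mulR : forall x y, mul (R x) (R y) = R (mul (R x) y + mul x (R y)).

Lemma mul0x y : mul 0 y = 0.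
Proof. exact: linear_fun0 (mul_linl y). Qed.

Lemma R_mul_xR x y : R (mul x (R y)) = mul (R x) (R y) - R (mul (R x) y).
Proof. by rewrite R_mulR -(zmod_morphism_linear R_linear) addrC addKr. Qed.

Lemma mul_R1_iterR1 n :
  mul (R one) (iter n R one) = n.+1%:R *: iter n.+1 R one.
Proof.
elim: n => [|n IH]; first by rewrite scale1r mulx1.
rewrite [iter n.+1 R one]iterS R_mulR -iterS IH mul1x.
by rewrite -[X in _ + X]scale1r -scalerDl -mulrSr linear_funZ.
Qed.

Lemma npow_R1 n : npow mul one (R one) n = n`!%:R *: iter n R one.
Proof.
elim: n => [|n IH] /=; first by rewrite scale1r.
by rewrite IH linear_funZ // mul_R1_iterR1 scalerA -natrM mulnC.
Qed.

Lemma iterR1_eq0 m :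
  [pchar F] =i pred0 -> npow mul one (R one) m = 0 -> iter m R one = 0.
Proof.
move=> /pcharf0P charF0; rewrite npow_R1 => /eqP.
by rewrite scaler_eq0 charF0 eqn0Ngt fact_gt0 => /eqP.
Qed.

Lemma iterR_mul_iterR i k y :
  iter (k + i) R one = 0 -> iter i R (mul (iter k R one) (iter i R y)) = 0.
Proof.
elim: i k y => [|i IH] k y.
  by rewrite addn0 => ->; exact: mul0x.
rewrite addnS -addSn => /IH vanish.
rewrite iterSr iterS R_mul_xR (zmod_morphism_linear (iter_linear i R_linear)).
rewrite -[R (iter k R one)]/(iter k.+1 R one) -(iterS i) (iterSr i) vanish.
by rewrite -iterSr iterS vanish linear_fun0 // subrr.
Qed.

Lemma iterR_nilpotent m x : iter m R one = 0 -> iter (m + m) R x = 0.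
Proof.
move=> Rm1; rewrite iterD -[iter m R x]mul1x.
by apply: (iterR_mul_iterR (k := 0)); rewrite add0n.
Qed.

End RotaBaxter.

Theorem lemma11 (F : fieldType) (V : lmodType F) (mul : V -> V -> V) (one : V)
  (R : V -> V) (m : nat) :
  [pchar F] =i pred0 ->
  bilinear_mul mul -> unital mul one -> power_associative mul ->
  rota_baxter0 mul R ->
  npow mul one (R one) m = 0 ->
  ((associative_alg mul \/ alternative_alg mul) ->
     forall x : V, iter (2 * m)%N R x = 0) /\
  (jordan_alg mul -> forall x : V, iter (3 * m - 1)%N R x = 0).
Proof.
move=> charF0 [mulDZl mulDZr] mul_unit _ [R_linear R_mulR] Rm.
have mul1x x : mul one x = x by case: (mul_unit x).
have mulx1 x : mul x one = x by case: (mul_unit x).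
have mul_linl y : linear (mul^~ y) by move=> a u v; apply: mulDZl.
have mul_linr x : linear (mul x) by move=> a u v; apply: mulDZr.
have R2m x : iter (2 * m) R x = 0.
  rewrite mul2n -addnn (iterR_nilpotent mul_linl mul1x R_linear R_mulR) //.
  exact: (iterR1_eq0 mul_linr mul1x mulx1 R_linear R_mulR).
split=> // _ x.
have -> : (3 * m - 1 = (m - 1) + 2 * m)%N by lia.
by rewrite iterD R2m (linear_fun0 (iter_linear (m - 1) R_linear)).
Qed.
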